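(* Let $G\le\mathrm{Homeo}_+(\mathbb{R})$ be finitely generated. Then every point of $\mathrm{crs}\,G$ lies in $J_1\cup J_2$ for some two-chain $\{J_1,J_2\}$ with $J_1,J_2\in\bigcup_{g\in G}\pi_0\operatorname{supp} g$. In particular, if $U\subseteq\mathbb{R}$ is a $G$-invariant set such that the restricted action $G|_U$ is Conradian, then $U\cap \mathrm{crs}\,G=\varnothing$.
   Context: For $g\in\mathrm{Homeo}_+(\mathbb{R})$, $\operatorname{supp} g=\mathbb{R}\setminus\mathrm{Fix}(g)$, $\operatorname{supp}G=\bigcup_{g\in G}\operatorname{supp} g$, and $\pi_0 X$ denotes the set of connected components of $X$. The crossed support $\mathrm{crs}\,G$ is the union of those components $J\in\pi_0\operatorname{supp} G$ which are not a connected component of $\operatorname{supp} g$ for any $g\in G$. A pair of open intervals $\{J_1,J_2\}$ is a two-chain if $J_1\cap J_2$ is a proper nonempty subinterval of both. For a group acting by order-preserving bijections on an ordered set $\Omega$, $f,g$ are crossed if there exist $u<w<v$ in $\Omega$ with $g^n(u)<w<f^n(v)$ for all $n\in\mathbb{Z}$ and $g^N(v)<w<f^N(u)$ for some $N\in\mathbb{Z}$; the action is Conradian if no two elements are crossed. *)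

From Stdlib Require Import Reals Lra ZArith List ClassicalEpsilon.
Open Scope R_scope.

Definition homeo_plus (g : R -> R) : Prop :=
  continuity g /\ (forall x y, x < y -> g x < g y) /\ (forall y, exists x, g x = y).

Definition finv (g : R -> R) (y : R) : R :=
  epsilon (inhabits 0) (fun x => g x = y).

Definition zpow (g : R -> R) (n : Z) : R -> R :=
  match n with
  | Z0 => fun x => x
  | Zpos p => fun x => Nat.iter (Pos.to_nat p) g x
  | Zneg p => fun x => Nat.iter (Pos.to_nat p) (finv g) x
  end.

Definition is_subgroup (G : (R -> R) -> Prop) : Prop :=
  (forall g, G g -> homeo_plus g) /\
  G (fun x => x) /\
  (forall f g, G f -> G g -> G (fun x => f (g x))) /\
  (forall g, G g -> exists h, G h /\ forall x, h (g x) = x /\ g (h x) = x).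

Inductive generated (S : list (R -> R)) : (R -> R) -> Prop :=
  | gen_id : generated S (fun x => x)
  | gen_base : forall s, In s S -> generated S s
  | gen_comp : forall f g, generated S f -> generated S g ->
      generated S (fun x => f (g x))
  | gen_inv : forall f h, generated S f ->
      (forall x, h (f x) = x /\ f (h x) = x) -> generated S h.

Definition fin_gen (G : (R -> R) -> Prop) : Prop :=
  exists S : list (R -> R), (forall s, In s S -> G s) /\
    (forall g, G g -> generated S g).

Definition supp (g : R -> R) (x : R) : Prop := g x <> x.
Definition suppG (G : (R -> R) -> Prop) (x : R) : Prop := exists g, G g /\ supp g x.

Definition is_interval (J : R -> Prop) : Prop :=
  forall a b c, J a -> J c -> a <= b <= c -> J b.
Definition is_open (J : R -> Prop) : Prop :=
  forall x, J x -> exists e, 0 < e /\ forall y, Rabs (y - x) < e -> J y.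
Definition open_interval (J : R -> Prop) : Prop := is_interval J /\ is_open J.

Definition is_component (X J : R -> Prop) : Prop :=
  (exists x, J x) /\ is_interval J /\ (forall x, J x -> X x) /\
  (forall K, is_interval K -> (forall x, K x -> X x) ->
     (exists x, K x /\ J x) -> forall x, K x -> J x).

Definition crs (G : (R -> R) -> Prop) (x : R) : Prop :=
  exists J, is_component (suppG G) J /\ J x /\
    ~ (exists g, G g /\ is_component (supp g) J).

Definition comp_of_elt (G : (R -> R) -> Prop) (J : R -> Prop) : Prop :=
  exists g, G g /\ is_component (supp g) J.

Definition two_chain (J1 J2 : R -> Prop) : Prop :=
  open_interval J1 /\ open_interval J2 /\
  (exists x, J1 x /\ J2 x) /\
  (exists x, J1 x /\ ~ J2 x) /\
  (exists x, J2 x /\ ~ J1 x).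

Definition invariant (G : (R -> R) -> Prop) (U : R -> Prop) : Prop :=
  forall g x, G g -> U x -> U (g x).

Definition crossed_on (U : R -> Prop) (f g : R -> R) : Prop :=
  exists u w v, U u /\ U w /\ U v /\ u < w < v /\
    (forall n : Z, zpow g n u < w < zpow f n v) /\
    (exists N : Z, zpow g N v < w < zpow f N u).

Definition conradian_on (G : (R -> R) -> Prop) (U : R -> Prop) : Prop :=
  forall f g, G f -> G g -> ~ crossed_on U f g.

(* Let x lie in a component J of supp G that is not a component of supp g for any g in G.
   Among the components through x of the supports of the finitely many generators pick a
   maximal one, I.  It is a proper subinterval of J, so a boundary point b of I lies in J
   and is moved by some generator s; the component of supp s through b meets I but, by
   maximality of I, does not contain it, and the two form a two-chain.

   For the second claim, a bounded monotone orbit of a homeomorphism converges to a fixed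
   point, so orbits travel through a whole component of a support.  Given a two-chain
   J1, J2 overlapping from the left and a point of U in it, orbits yield u < w < v in U
   with u in J1 \ J2, w in J1 /\ J2 and v in J2 \ J1; an element pushing J1 upward and
   one pushing J2 downward are then crossed on U. *)

From Stdlib Require Import Reals Lra Lia List Classical ClassicalEpsilon ZArith.
Open Scope R_scope.

Definition between (a t b : R) : Prop := a <= t <= b \/ b <= t <= a.

Definition component_at (X : R -> Prop) (x z : R) : Prop :=
  forall t, between x t z -> X t.

Lemma component_at_interval X x : is_interval (component_at X x).
Proof.
  intros a b c Ha Hc Hb t Ht.
  destruct (Rle_dec x b); [apply Hc | apply Ha]; unfold between in *; lra.
Qed.

Lemma component_at_sub X x z : component_at X x z -> X z.
Proof. intros H; apply H; unfold between; lra. Qed.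

Lemma component_at_self X x : X x -> component_at X x x.
Proof. intros Hx t Ht. unfold between in Ht. replace t with x by lra. exact Hx. Qed.

Lemma component_at_is_component X x : X x -> is_component X (component_at X x).
Proof.
  intros Hx. split; [exists x; apply component_at_self; auto|].
  split; [apply component_at_interval|].
  split; [intros z; apply component_at_sub|].
  intros K HK HKX [y [Ky Hy]] z Kz t Ht.
  destruct (classic (between x t y)) as [Hty|Hty]; [apply Hy; auto|].
  apply HKX. unfold between in *.
  destruct (Rle_dec y z); [apply (HK y t z) | apply (HK z t y)]; auto; lra.
Qed.

Lemma component_at_unique X J x : is_component X J -> J x ->
  forall z, J z <-> component_at X x z.
Proof.
  intros [_ [HI [Hsub Hmax]]] Hx z. split.
  - intros Hz t Ht. apply Hsub. unfold between in Ht.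
    destruct Ht; [apply (HI x t z) | apply (HI z t x)]; auto.
  - intros Hz. apply (Hmax (component_at X x)); auto.
    + apply component_at_interval.
    + intros t; apply component_at_sub.
    + exists x; split; auto. apply component_at_self, Hsub, Hx.
Qed.

Lemma component_at_open X x : is_open X -> is_open (component_at X x).
Proof.
  intros HX z Hz. destruct (HX z (component_at_sub _ _ _ Hz)) as [e [He Hball]].
  exists e; split; auto. intros y Hy t Ht.
  destruct (classic (between x t z)) as [Htz|Htz]; [apply Hz; auto|].
  apply Hball. unfold between in *. apply Rabs_def2 in Hy. apply Rabs_def1; lra.
Qed.

Lemma is_component_iff X Y J K : (forall z, X z <-> Y z) -> (forall z, J z <-> K z) ->
  is_component X J -> is_component Y K.
Proof.
  intros HXY HJK [[x Jx] [HI [Hsub Hmax]]].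
  split; [exists x; apply HJK; auto|].
  split; [intros a b c Ka Kc Hb; apply HJK, (HI a b c); try apply HJK; auto|].
  split; [intros z Kz; apply HXY, Hsub, HJK, Kz|].
  intros K' HK' HK'Y [y [K'y Ky]] z K'z. apply HJK, (Hmax K'); auto.
  - intros t K't. apply HXY; auto.
  - exists y; split; auto. apply HJK; auto.
Qed.

Lemma supp_open g : continuity g -> is_open (supp g).
Proof.
  intros Hc z Hz. unfold supp in Hz.
  set (d := Rabs (g z - z)).
  assert (Hd : 0 < d) by (apply Rabs_pos_lt; lra).
  assert (Hd_cases : d = g z - z \/ d = - (g z - z)).
  { unfold d, Rabs. destruct (Rcase_abs (g z - z)); [right | left]; ring. }
  destruct (Hc z (d / 2)) as [alp [Halp Hnear]]; [lra|].
  exists (Rmin alp (d / 2)). split; [apply Rmin_pos; lra|].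
  intros y Hy Hfix. destruct (Req_dec z y) as [<-|Hne]; [contradiction|].
  pose proof (Rmin_l alp (d / 2)). pose proof (Rmin_r alp (d / 2)).
  assert (Hgy : Rabs (g y - g z) < d / 2).
  { apply Hnear. split; [split; [exact I | exact Hne] | change (Rabs (y - z) < alp); lra]. }
  rewrite Hfix in Hgy. apply Rabs_def2 in Hgy. apply Rabs_def2 in Hy. lra.
Qed.

Lemma generated_fixes S g y : generated S g -> (forall s, In s S -> s y = y) -> g y = y.
Proof.
  induction 1 as [| s Hs | f1 f2 _ IH1 _ IH2 | f h _ IHf Hfh]; intros Hfix; auto.
  - rewrite IH2, IH1; auto.
  - rewrite <- (IHf Hfix) at 1. apply Hfh.
Qed.

Lemma generator_moves G S y : (forall g, G g -> generated S g) -> suppG G y ->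
  exists s, In s S /\ supp s y.
Proof.
  intros HGS [g [Hg Hgy]]. apply NNPP. intros Hnone. apply Hgy.
  apply (generated_fixes S); auto.
  intros s Hs. apply NNPP. intros Hsy. apply Hnone. exists s; auto.
Qed.

Lemma list_maximal_above {A} (lt : A -> A -> Prop) :
  (forall a b c, lt a b -> lt b c -> lt a c) -> (forall a, ~ lt a a) ->
  forall l a, In a l ->
  exists m, In m l /\ (a = m \/ lt a m) /\ forall b, In b l -> ~ lt m b.
Proof.
  intros Htrans Hirr l. induction l as [|c l IH]; intros a Ha; [destruct Ha|].
  destruct (classic (exists a', In a' l /\ (a = a' \/ lt a a'))) as [[a' [Ha' Haa']]|Hnone].
  - destruct (IH a' Ha') as [m [Hm [Ha'm Hmax]]].
    assert (Ham : a = m \/ lt a m).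
    { destruct Haa' as [<-|Haa']; destruct Ha'm as [<-|Ha'm]; eauto. }
    destruct (classic (lt m c)) as [Hmc|Hmc].
    + exists c. split; [left; auto|]. split.
      * right. destruct Ham as [<-|Ham]; eauto.
      * intros b [<-|Hb] Hcb; [exact (Hirr _ Hcb)|]. exact (Hmax b Hb (Htrans _ _ _ Hmc Hcb)).
    + exists m. split; [right; auto|]. split; auto. intros b [<-|Hb]; auto.
  - destruct Ha as [->|Ha]; [|exfalso; eauto].
    exists a. split; [left; auto|]. split; [left; auto|].
    intros b [<-|Hb] Hab; [exact (Hirr _ Hab)|]. eauto.
Qed.

Definition strict_subset (A B : R -> Prop) : Prop :=
  (forall z, A z -> B z) /\ exists z, B z /\ ~ A z.

Lemma maximal_component_at (S : list (R -> R)) x s0 : In s0 S -> supp s0 x ->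
  exists s, In s S /\ supp s x /\
    forall s', In s' S -> ~ strict_subset (component_at (supp s) x) (component_at (supp s') x).
Proof.
  intros Hs0 Hx.
  destruct (list_maximal_above strict_subset)
    with (l := map (fun s => component_at (supp s) x) S) (a := component_at (supp s0) x)
    as [m [Hm [Hs0m Hmax]]].
  - intros A B C [HAB _] [HBC [z [Cz nBz]]]. split; eauto.
    exists z. split; auto.
  - intros A [_ [z [Az nAz]]]. contradiction.
  - apply (in_map (fun s => component_at (supp s) x)); auto.
  - apply in_map_iff in Hm. destruct Hm as [s [<- Hs]].
    exists s. split; auto. split.
    + apply (component_at_sub _ x).
      destruct Hs0m as [<-|[Hsub _]]; [|apply Hsub]; apply component_at_self; auto.
    + intros s' Hs'. apply Hmax, (in_map (fun s => component_at (supp s) x)); auto.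
Qed.

Definition adherent (A : R -> Prop) (b : R) : Prop :=
  forall e, 0 < e -> exists z, A z /\ Rabs (z - b) < e.

Lemma open_boundary_right m x y : is_open m -> m x -> ~ m y -> x < y ->
  exists b, x <= b <= y /\ ~ m b /\ adherent m b.
Proof.
  intros Hm Hx Hy Hxy.
  set (E := fun z => m z /\ z <= y).
  assert (HE_bound : bound E) by (exists y; intros z [_ Hz]; auto).
  assert (HE_ne : exists z, E z) by (exists x; split; auto; lra).
  destruct (completeness E HE_bound HE_ne) as [b [Hub Hlub]].
  assert (Hxb : x <= b) by (apply Hub; split; auto; lra).
  assert (Hby : b <= y) by (apply Hlub; intros z [_ Hz]; auto).
  exists b. split; [lra|]. split.
  - intros Hb. destruct (Hm b Hb) as [e [He Hball]].
    assert (b <> y) by (intros ->; contradiction).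
    set (z := b + Rmin e (y - b) / 2).
    pose proof (Rmin_l e (y - b)). pose proof (Rmin_r e (y - b)).
    assert (0 < Rmin e (y - b)) by (apply Rmin_pos; lra).
    assert (Ez : E z) by (split; [apply Hball, Rabs_def1 | ]; unfold z; lra).
    pose proof (Hub z Ez). unfold z in *. lra.
  - intros e He. apply NNPP. intros Hfar.
    assert (b <= b - e); [|lra].
    apply Hlub. intros z [Hz Hzy].
    assert (z <= b) by (apply Hub; split; auto).
    apply Rnot_lt_le. intros Hlt. apply Hfar. exists z. split; auto. apply Rabs_def1; lra.
Qed.

Lemma open_boundary m x y : is_open m -> m x -> ~ m y ->
  exists b, between x b y /\ ~ m b /\ adherent m b.
Proof.
  intros Hm Hx Hy. destruct (Rtotal_order x y) as [Hxy|[<-|Hyx]]; [| contradiction |].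
  - destruct (open_boundary_right m x y Hm Hx Hy Hxy) as [b [Hb Hbm]].
    exists b. split; auto. left; auto.
  - destruct (open_boundary_right (fun z => m (- z)) (- x) (- y)) as [b [Hb [Hbm Hadh]]].
    + intros z Hz. destruct (Hm (- z) Hz) as [e [He Hball]]. exists e. split; auto.
      intros w Hw. apply Hball. rewrite <- Rabs_Ropp. replace (- (- w - - z)) with (w - z) by ring. auto.
    + rewrite Ropp_involutive; auto.
    + rewrite Ropp_involutive; auto.
    + lra.
    + exists (- b). split; [right; lra|]. split; auto.
      intros e He. destruct (Hadh e He) as [z [Hz Hze]]. exists (- z). split; auto.
      rewrite <- Rabs_Ropp. replace (- (- z - - b)) with (z - b) by ring. auto.
Qed.

Lemma two_chain_at_boundary X Y x b : is_open X -> is_open Y -> X x -> Y b ->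
  ~ component_at X x b -> adherent (component_at X x) b ->
  ~ strict_subset (component_at X x) (component_at Y x) ->
  two_chain (component_at X x) (component_at Y b).
Proof.
  intros HX HY Hx Hb Hxb Hadh Hmax.
  assert (HYb : component_at Y b b) by (apply component_at_self; auto).
  split; [split; [apply component_at_interval | apply component_at_open; auto]|].
  split; [split; [apply component_at_interval | apply component_at_open; auto]|].
  split; [|split].
  - destruct (component_at_open Y b HY b HYb) as [e [He Hball]].
    destruct (Hadh e He) as [z [Hz Hze]]. exists z. split; auto.
  - apply NNPP. intros Hsub. apply Hmax.
    assert (Hin : forall z, component_at X x z -> component_at Y b z).
    { intros z Hz. apply NNPP. intros Hz'. apply Hsub. eauto. }
    assert (Heq := component_at_unique Y _ x (component_at_is_component Y b Hb)
                     (Hin x (component_at_self X x Hx))).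
    split; [intros z Hz; apply Heq, Hin, Hz|].
    exists b. split; auto. apply Heq; auto.
  - exists b. split; auto.
Qed.

Lemma crs_two_chain G : is_subgroup G -> fin_gen G ->
  forall x, crs G x ->
  exists J1 J2, two_chain J1 J2 /\ comp_of_elt G J1 /\ comp_of_elt G J2 /\ (J1 x \/ J2 x).
Proof.
  intros [Hhomeo _] [S [HSG HGS]] x [J [HJ [Jx HJnot]]].
  assert (Hopen : forall s, In s S -> is_open (supp s)).
  { intros s Hs. apply supp_open, Hhomeo, HSG, Hs. }
  destruct HJ as [HJne [HJI [HJsub HJmax]]].
  destruct (generator_moves G S x HGS (HJsub x Jx)) as [s0 [Hs0 Hs0x]].
  destruct (maximal_component_at S x s0 Hs0 Hs0x) as [s1 [Hs1 [Hs1x Hmax]]].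
  set (m := component_at (supp s1) x) in *.
  assert (HmJ : forall z, m z -> J z).
  { apply HJmax; auto.
    - apply component_at_interval.
    - intros z Hz. exists s1. split; [auto | exact (component_at_sub _ _ _ Hz)].
    - exists x. split; auto. apply component_at_self; auto. }
  assert (Hy : exists y, J y /\ ~ m y).
  { apply NNPP. intros Hnone. apply HJnot. exists s1. split; auto.
    apply (is_component_iff (supp s1) _ m); try tauto.
    - intros z. split; auto. intros Jz. apply NNPP. eauto.
    - apply component_at_is_component; auto. }
  destruct Hy as [y [Jy Hym]].
  destruct (open_boundary m x y) as [b [Hb [Hbm Hadh]]]; auto.
  { apply component_at_open; auto. }
  { apply component_at_self; auto. }
  assert (Jb : J b) by (destruct Hb; [apply (HJI x b y) | apply (HJI y b x)]; auto).
  destruct (generator_moves G S b HGS (HJsub b Jb)) as [s2 [Hs2 Hs2b]].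
  exists m, (component_at (supp s2) b). split; [|split; [|split]].
  - apply two_chain_at_boundary; auto.
  - exists s1. split; auto. apply component_at_is_component; auto.
  - exists s2. split; auto. apply component_at_is_component; auto.
  - left. apply component_at_self; auto.
Qed.

Lemma strict_increasing_le k : strict_increasing k -> forall a b, a <= b -> k a <= k b.
Proof. intros Hk a b [Hab|<-]; [left; apply Hk, Hab | right; reflexivity]. Qed.

Lemma homeo_finv k y : homeo_plus k -> k (finv k y) = y.
Proof.
  intros [_ [_ Hsurj]]. exact (epsilon_spec (inhabits 0) (fun x => k x = y) (Hsurj y)).
Qed.

Lemma zpow_preserves (P : R -> Prop) k :
  (forall z, P z -> P (k z)) -> (forall z, P z -> P (finv k z)) ->
  forall n z, P z -> P (zpow k n z).
Proof.
  intros Hk Hinv.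
  assert (Hiter : forall f, (forall z, P z -> P (f z)) -> forall m z, P z -> P (Nat.iter m f z)).
  { intros f Hf m. induction m; intros z Hz; simpl; auto. }
  intros [|p|p] z Hz; simpl; auto.
Qed.

Lemma zpow_le_fixed k c n z : homeo_plus k -> k c = c -> z <= c -> zpow k n z <= c.
Proof.
  intros Hk Hc. pose proof (proj1 (proj2 Hk)) as Hinc.
  revert n z. apply (zpow_preserves (fun z => z <= c)); intros w Hw.
  - rewrite <- Hc. apply strict_increasing_le; auto.
  - apply Rnot_lt_le. intros Hlt. apply Hinc in Hlt.
    rewrite Hc, homeo_finv in Hlt; auto. lra.
Qed.

Lemma zpow_ge_fixed k c n z : homeo_plus k -> k c = c -> c <= z -> c <= zpow k n z.
Proof.
  intros Hk Hc. pose proof (proj1 (proj2 Hk)) as Hinc.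
  revert n z. apply (zpow_preserves (fun z => c <= z)); intros w Hw.
  - rewrite <- Hc. apply strict_increasing_le; auto.
  - apply Rnot_lt_le. intros Hlt. apply Hinc in Hlt.
    rewrite Hc, homeo_finv in Hlt; auto. lra.
Qed.

Lemma zpow_of_nat k n z : zpow k (Z.of_nat n) z = Nat.iter n k z.
Proof. destruct n; simpl; auto. rewrite SuccNat2Pos.id_succ. reflexivity. Qed.

Lemma Un_cv_const c : Un_cv (fun _ => c) c.
Proof.
  intros e He. exists 0%nat. intros n _. unfold R_dist.
  replace (c - c) with 0 by ring. rewrite Rabs_R0. exact He.
Qed.

Lemma orbit_limit_fixed k y l : continuity k -> Un_cv (fun n => Nat.iter n k y) l -> k l = l.
Proof.
  intros Hc Hl. apply (UL_sequence (fun n => Nat.iter (S n) k y)).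
  - exact (continuity_seq k _ l (Hc l) Hl).
  - intros e He. destruct (Hl e He) as [N HN]. exists N. intros n Hn. apply HN. lia.
Qed.

Lemma orbit_eventually_above k y t : continuity k -> strict_increasing k -> y < k y ->
  (forall z, y <= z <= t -> k z <> z) ->
  exists N, forall n, (N <= n)%nat -> t < Nat.iter n k y.
Proof.
  intros Hc Hk Hy Hfree.
  set (u := fun n => Nat.iter n k y).
  assert (Hgrow : Un_growing u).
  { intros n. unfold u. induction n as [|n IH]; simpl in *; [lra|].
    apply strict_increasing_le; auto. }
  destruct (classic (exists N, t < u N)) as [[N HN]|Hnone].
  - exists N. intros n Hn. pose proof (growing_prop u n N Hgrow Hn). unfold u in *. lra.
  - assert (Hbound : forall n, u n <= t).
    { intros n. apply Rnot_lt_le. intros Hlt. apply Hnone. eauto. }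
    destruct (growing_cv u Hgrow) as [l Hl]; [exists t; intros z [n ->]; auto|].
    exfalso. apply (Hfree l).
    + split; [exact (growing_ineq u l Hgrow Hl 0) |].
      exact (@Rle_cv_lim u (fun _ => t) l t Hbound Hl (Un_cv_const t)).
    + exact (orbit_limit_fixed k y l Hc Hl).
Qed.

Lemma orbit_eventually_below k y t : continuity k -> strict_increasing k -> k y < y ->
  (forall z, t <= z <= y -> k z <> z) ->
  exists N, forall n, (N <= n)%nat -> Nat.iter n k y < t.
Proof.
  intros Hc Hk Hy Hfree.
  set (u := fun n => Nat.iter n k y).
  assert (Hdecr : Un_decreasing u).
  { intros n. unfold u. induction n as [|n IH]; simpl in *; [lra|].
    apply strict_increasing_le; auto. }
  destruct (classic (exists N, u N < t)) as [[N HN]|Hnone].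
  - exists N. intros n Hn. pose proof (decreasing_prop u N n Hdecr Hn). unfold u in *. lra.
  - assert (Hbound : forall n, t <= u n).
    { intros n. apply Rnot_lt_le. intros Hlt. apply Hnone. eauto. }
    destruct (decreasing_cv u Hdecr) as [l Hl].
    { exists (- t). intros z [n ->]. unfold opp_seq. pose proof (Hbound n). lra. }
    exfalso. apply (Hfree l).
    + split; [exact (@Rle_cv_lim (fun _ => t) u t l Hbound (Un_cv_const t) Hl) |].
      exact (decreasing_ineq u l Hdecr Hl 0).
    + exact (orbit_limit_fixed k y l Hc Hl).
Qed.

Lemma component_no_fixed k K a b z : is_component (supp k) K -> K a -> K b ->
  a <= z <= b -> k z <> z.
Proof. intros [_ [HI [Hsub _]]] Ka Kb Hz. apply Hsub, (HI a z b); auto. Qed.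

Lemma component_gap X K w u : is_component X K -> K w -> ~ K u ->
  exists c, between u c w /\ ~ X c.
Proof.
  intros HK Kw Ku. apply NNPP. intros Hnone. apply Ku.
  apply (component_at_unique X K w HK Kw). intros t Ht. apply NNPP. intros Xt.
  apply Hnone. exists t. split; auto. unfold between in *. tauto.
Qed.

Lemma component_invariant k K z : strict_increasing k -> is_component (supp k) K ->
  K z -> K (k z).
Proof.
  intros Hk HK Kz. apply (component_at_unique _ K z HK Kz).
  assert (Hmove : k z <> z) by (destruct HK as [_ [_ [Hsub _]]]; apply Hsub, Kz).
  intros t Ht Hfix. unfold between in Ht.
  destruct (Rtotal_order z t) as [Hlt|[<-|Hgt]]; [pose proof (Hk _ _ Hlt) | contradiction | pose proof (Hk _ _ Hgt)]; lra.
Qed.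

Lemma component_invariant_iter k K : strict_increasing k -> is_component (supp k) K ->
  forall n z, K z -> K (Nat.iter n k z).
Proof.
  intros Hk HK n. induction n; intros z Kz; simpl; auto. apply component_invariant; auto.
Qed.

Lemma is_component_supp_inverse k h K : (forall x, h (k x) = x /\ k (h x) = x) ->
  is_component (supp k) K -> is_component (supp h) K.
Proof.
  intros Hkh. apply is_component_iff; [|tauto]. intros z. unfold supp. split; intros Hz Hfix.
  - apply Hz. rewrite <- Hfix at 1. apply Hkh.
  - apply Hz. rewrite <- Hfix at 1. apply Hkh.
Qed.

Lemma inverse_moves_opposite k h y : strict_increasing k -> k (h y) = y ->
  (k y < y -> y < h y) /\ (y < k y -> h y < y).
Proof.
  intros Hk Hkh.
  destruct (Rtotal_order y (h y)) as [Hlt|[Heq|Hgt]].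
  - pose proof (Hk _ _ Hlt). lra.
  - rewrite <- Heq in Hkh. lra.
  - pose proof (Hk _ _ Hgt). lra.
Qed.

Lemma component_pushers G k K y : is_subgroup G -> G k -> is_component (supp k) K -> K y ->
  (exists f, G f /\ is_component (supp f) K /\ y < f y) /\
  (exists f, G f /\ is_component (supp f) K /\ f y < y).
Proof.
  intros [Hhomeo [_ [_ Hinv]]] Gk HK Ky.
  destruct (Hinv k Gk) as [h [Gh Hkh]].
  assert (HKh := is_component_supp_inverse k h K Hkh HK).
  destruct (Hhomeo k Gk) as [_ [Hk _]].
  destruct (inverse_moves_opposite k h y Hk (proj2 (Hkh y))) as [Hup Hdown].
  assert (Hmove : k y <> y) by (destruct HK as [_ [_ [Hsub _]]]; apply Hsub, Ky).
  destruct (Rtotal_order (k y) y) as [Hlt|[Heq|Hgt]]; [| contradiction |].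
  - split; [exists h | exists k]; auto.
  - split; [exists k | exists h]; auto.
Qed.

Lemma subgroup_iter G f : is_subgroup G -> G f -> forall n, G (Nat.iter n f).
Proof.
  intros [_ [Hid [Hcomp _]]] Gf n. induction n; [exact Hid | exact (Hcomp _ _ Gf IHn)].
Qed.

Lemma orbit_enters_above G k K y t : is_subgroup G -> G k -> is_component (supp k) K ->
  K y -> K t -> y < t -> exists g, G g /\ K (g y) /\ t < g y.
Proof.
  intros HG Gk HK Ky Kt Hyt.
  destruct (component_pushers G k K y HG Gk HK Ky) as [[f [Gf [HKf Hfy]]] _].
  destruct (proj1 HG f Gf) as [Hc [Hf _]].
  destruct (orbit_eventually_above f y t Hc Hf Hfy) as [N HN].
  { intros z Hz. exact (component_no_fixed f K y t z HKf Ky Kt Hz). }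
  exists (Nat.iter N f). split; [apply subgroup_iter; auto|].
  split; [apply component_invariant_iter; auto | apply HN; lia].
Qed.

Lemma orbit_enters_below G k K y t : is_subgroup G -> G k -> is_component (supp k) K ->
  K y -> K t -> t < y -> exists g, G g /\ K (g y) /\ g y < t.
Proof.
  intros HG Gk HK Ky Kt Hty.
  destruct (component_pushers G k K y HG Gk HK Ky) as [_ [f [Gf [HKf Hfy]]]].
  destruct (proj1 HG f Gf) as [Hc [Hf _]].
  destruct (orbit_eventually_below f y t Hc Hf Hfy) as [N HN].
  { intros z Hz. exact (component_no_fixed f K t y z HKf Kt Ky Hz). }
  exists (Nat.iter N f). split; [apply subgroup_iter; auto|].
  split; [apply component_invariant_iter; auto | apply HN; lia].
Qed.

Lemma crossed_on_of_overlap (U : R -> Prop) f g L K u w v :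
  homeo_plus f -> homeo_plus g -> is_component (supp f) L -> is_component (supp g) K ->
  L u -> L w -> ~ K u -> K w -> K v -> ~ L v -> u < w < v -> u < f u -> g v < v ->
  U u -> U w -> U v -> crossed_on U f g.
Proof.
  intros Hf Hg HL HK Lu Lw Ku Kw Kv Lv Huwv Hfu Hgv Uu Uw Uv.
  (* Fixed points c of g in [u, w) and d of f in (w, v] confine the orbits g^n u and f^n v. *)
  destruct (component_gap _ K w u HK Kw Ku) as [c [Hc Hgc]]. apply NNPP in Hgc.
  destruct (component_gap _ L w v HL Lw Lv) as [d [Hd Hfd]]. apply NNPP in Hfd.
  assert (Hcw : u <= c < w).
  { assert (c <> w) by (intros ->; exact (proj1 (proj2 (proj2 HK)) w Kw Hgc)).
    unfold between in Hc. lra. }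
  assert (Hdw : w < d <= v).
  { assert (d <> w) by (intros ->; exact (proj1 (proj2 (proj2 HL)) w Lw Hfd)).
    unfold between in Hd. lra. }
  destruct (orbit_eventually_above f u w (proj1 Hf) (proj1 (proj2 Hf)) Hfu) as [N1 HN1].
  { intros z Hz. exact (component_no_fixed f L u w z HL Lu Lw Hz). }
  destruct (orbit_eventually_below g v w (proj1 Hg) (proj1 (proj2 Hg)) Hgv) as [N2 HN2].
  { intros z Hz. exact (component_no_fixed g K w v z HK Kw Kv Hz). }
  exists u, w, v. do 3 (split; [assumption|]). split; [lra|]. split.
  - intros n. pose proof (zpow_le_fixed g c n u Hg Hgc (proj1 Hcw)).
    pose proof (zpow_ge_fixed f d n v Hf Hfd (proj2 Hdw)). lra.
  - exists (Z.of_nat (max N1 N2)). rewrite !zpow_of_nat.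
    split; [apply HN2 | apply HN1]; lia.
Qed.

Definition overlaps_left (L K : R -> Prop) : Prop :=
  exists q1 p q2, q1 < p < q2 /\ L q1 /\ ~ K q1 /\ L p /\ K p /\ K q2 /\ ~ L q2.

Lemma two_chain_overlaps J1 J2 : two_chain J1 J2 -> overlaps_left J1 J2 \/ overlaps_left J2 J1.
Proof.
  intros [[I1 _] [[I2 _] [[p [J1p J2p]] [[a [J1a J2a]] [b [J2b J1b]]]]]].
  assert (a <> p) by (intros ->; contradiction).
  assert (b <> p) by (intros ->; contradiction).
  destruct (Rlt_or_le a p) as [Hap|Hpa].
  - assert (p < b).
    { apply Rnot_le_lt. intros Hbp. destruct (Rle_dec a b).
      - apply J1b, (I1 a b p); auto; lra.
      - apply J2a, (I2 b a p); auto; lra. }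
    left. exists a, p, b. repeat split; auto; lra.
  - assert (b < p).
    { apply Rnot_le_lt. intros Hpb. destruct (Rle_dec a b).
      - apply J2a, (I2 p a b); auto; lra.
      - apply J1b, (I1 p b a); auto; lra. }
    right. exists b, p, a. repeat split; auto; lra.
Qed.

Lemma overlap_orbit_point G (U : R -> Prop) h1 h2 L K x : is_subgroup G -> G h1 -> G h2 ->
  is_component (supp h1) L -> is_component (supp h2) K -> overlaps_left L K ->
  invariant G U -> U x -> L x \/ K x -> exists w, U w /\ L w /\ K w.
Proof.
  intros HG G1 G2 HL HK [q1 [p [q2 [Hq [Lq1 [Kq1 [Lp [Kp [Kq2 Lq2]]]]]]]]] HU Ux Hx.
  assert (IL := proj1 (proj2 HL)). assert (IK := proj1 (proj2 HK)).
  destruct (classic (L x)) as [Lx|Lx]; destruct (classic (K x)) as [Kx|Kx].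
  - exists x; auto.
  - assert (Hxp : x < p).
    { apply Rnot_le_lt. intros Hpx. destruct (Rle_dec x q2).
      - apply Kx, (IK p x q2); auto.
      - apply Lq2, (IL p q2 x); auto; lra. }
    destruct (orbit_enters_above G h1 L x p HG G1 HL Lx Lp Hxp) as [g [Gg [Lgx Hgx]]].
    exists (g x). split; [apply HU; auto|]. split; auto.
    destruct (Rle_dec q2 (g x)).
    + exfalso. apply Lq2, (IL p q2 (g x)); auto; lra.
    + apply (IK p (g x) q2); auto; lra.
  - assert (Hpx : p < x).
    { apply Rnot_le_lt. intros Hxp. destruct (Rle_dec q1 x).
      - apply Lx, (IL q1 x p); auto.
      - apply Kq1, (IK x q1 p); auto; lra. }
    destruct (orbit_enters_below G h2 K x p HG G2 HK Kx Kp Hpx) as [g [Gg [Kgx Hgx]]].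
    exists (g x). split; [apply HU; auto|]. split; auto.
    destruct (Rle_dec (g x) q1).
    + exfalso. apply Kq1, (IK (g x) q1 p); auto; lra.
    + apply (IL q1 (g x) p); auto; lra.
  - exfalso. tauto.
Qed.

Lemma overlap_crossed G (U : R -> Prop) h1 h2 L K x : is_subgroup G -> G h1 -> G h2 ->
  is_component (supp h1) L -> is_component (supp h2) K -> overlaps_left L K ->
  invariant G U -> U x -> L x \/ K x -> exists f g, G f /\ G g /\ crossed_on U f g.
Proof.
  intros HG G1 G2 HL HK Hov HU Ux Hx.
  destruct (overlap_orbit_point G U h1 h2 L K x HG G1 G2 HL HK Hov HU Ux Hx) as [w [Uw [Lw Kw]]].
  destruct Hov as [q1 [p [q2 [Hq [Lq1 [Kq1 [Lp [Kp [Kq2 Lq2]]]]]]]]].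
  assert (IL := proj1 (proj2 HL)). assert (IK := proj1 (proj2 HK)).
  assert (Hq1w : q1 < w).
  { apply Rnot_le_lt. intros Hwq1. apply Kq1, (IK w q1 p); auto; lra. }
  assert (Hwq2 : w < q2).
  { apply Rnot_le_lt. intros Hq2w. apply Lq2, (IL p q2 w); auto; lra. }
  destruct (orbit_enters_below G h1 L w q1 HG G1 HL Lw Lq1 Hq1w) as [a [Ga [Lu Hu]]].
  destruct (orbit_enters_above G h2 K w q2 HG G2 HK Kw Kq2 Hwq2) as [b [Gb [Kv Hv]]].
  set (u := a w) in *. set (v := b w) in *.
  assert (Ku : ~ K u) by (intros Ku; apply Kq1, (IK u q1 w); auto; lra).
  assert (Lv : ~ L v) by (intros Lv; apply Lq2, (IL w q2 v); auto; lra).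
  destruct (component_pushers G h1 L u HG G1 HL Lu) as [[f [Gf [HLf Hfu]]] _].
  destruct (component_pushers G h2 K v HG G2 HK Kv) as [_ [g [Gg [HKg Hgv]]]].
  exists f, g. split; [auto|]. split; [auto|].
  apply (crossed_on_of_overlap U f g L K u w v); auto.
  - exact (proj1 HG f Gf).
  - exact (proj1 HG g Gg).
  - lra.
  - exact (HU a w Ga Uw).
  - exact (HU b w Gb Uw).
Qed.

Theorem lemma2p9 (G : (R -> R) -> Prop) :
  is_subgroup G -> fin_gen G ->
  (forall x, crs G x ->
     exists J1 J2, two_chain J1 J2 /\ comp_of_elt G J1 /\ comp_of_elt G J2 /\
                   (J1 x \/ J2 x)) /\
  (forall U : R -> Prop, invariant G U -> conradian_on G U ->
     forall x, U x -> ~ crs G x).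
Proof.
  intros HG HF. split; [exact (crs_two_chain G HG HF)|].
  intros U HU Hconr x Ux Hx.
  destruct (crs_two_chain G HG HF x Hx)
    as [J1 [J2 [Hchain [[h1 [G1 HJ1]] [[h2 [G2 HJ2]] HxJ]]]]].
  assert (Hcrossed : exists f g, G f /\ G g /\ crossed_on U f g).
  { destruct (two_chain_overlaps J1 J2 Hchain) as [Hov|Hov].
    - exact (overlap_crossed G U h1 h2 J1 J2 x HG G1 G2 HJ1 HJ2 Hov HU Ux HxJ).
    - apply (overlap_crossed G U h2 h1 J2 J1 x HG G2 G1 HJ2 HJ1 Hov HU Ux). tauto. }
  destruct Hcrossed as [f [g [Gf [Gg Hfg]]]].
  exact (Hconr f g Gf Gg Hfg).
Qed.
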